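(* Let $V$ be a finite-dimensional real vector space with a linear action of the quaternion algebra $\mathbb H$, and $\Lambda\subset V$ a lattice of maximal rank. Then for all complex structures $L\in\mathbb H$ (i.e. $L^2=-1$) except for at most countably many, the following holds: every rational $L$-invariant subspace $W\subset V$ is $\mathbb H$-invariant.
   Context: A real subspace $W\subset V$ is rational if $\Lambda\cap W$ is a lattice of maximal rank in $W$. The elements $L\in\mathbb H$ with $L^2=-1$ are $L=aI+bJ+cK$ with $a^2+b^2+c^2=1$. *)

From HB Require Import structures.
From mathcomp Require Import all_boot all_order all_algebra.
From mathcomp Require Import boolp classical_sets cardinality reals.
Set Implicit Arguments. Unset Strict Implicit. Unset Printing Implicit Defensive.
Import Order.TTheory GRing.Theory Num.Theory.
Local Open Scope ring_scope.

(* V = 'rV[R]_n (row vectors); linear maps act on the right: v |-> v *m A. *)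

(* A linear action of the quaternions on V: images I, J of the units i, j
   with I^2 = J^2 = -1 and IJ = -JI; the image of k is K = I*J. *)
Definition quat_action (R : realType) (n : nat) (I J : 'M[R]_n) : Prop :=
  I *m I = - 1%:M /\ J *m J = - 1%:M /\ I *m J = - (J *m I).

Definition quatK (R : realType) (n : nat) (I J : 'M[R]_n) : 'M[R]_n := I *m J.

Definition quat_elt (R : realType) (n : nat) (I J : 'M[R]_n) (a b c : R) : 'M[R]_n :=
  a *: I + b *: J + c *: quatK I J.

Definition in_lattice (R : realType) (n : nat) (B : 'M[R]_n) (v : 'rV[R]_n) : Prop :=
  exists z : 'rV[int]_n, v = map_mx (fun k : int => k%:~R) z *m B.

(* Lambda is a lattice of maximal rank iff its basis matrix is invertible. *)
Definition full_lattice (R : realType) (n : nat) (B : 'M[R]_n) : Prop :=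
  B \in unitmx.

(* A subspace W (row space of a matrix) is rational w.r.t. Lambda if
   Lambda ∩ W is a lattice of maximal rank in W, i.e. W is spanned by
   vectors of Lambda lying in W. *)
Definition rational_subspace (R : realType) (n : nat) (B : 'M[R]_n) (W : 'M[R]_n) : Prop :=
  exists (m : nat) (A : 'M[R]_(m, n)),
    (forall i, in_lattice B (row i A)) /\ (A <= W)%MS /\ (W <= A)%MS.

Definition mx_invariant (R : realType) (n : nat) (W f : 'M[R]_n) : Prop :=
  (W *m f <= W)%MS.

From HB Require Import structures.
From mathcomp Require Import all_boot all_order all_algebra.
From mathcomp Require Import boolp classical_sets cardinality reals.
From mathcomp Require Import ring lra.
Import Order.TTheory GRing.Theory Num.Theory.
Set Implicit Arguments. Unset Strict Implicit. Unset Printing Implicit Defensive.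
Local Open Scope ring_scope.
Local Open Scope classical_set_scope.

(* Identify L = aI + bJ + cK with the vector u = (a, b, c); then
   L_u L_v = -(u.v) + L_(u x v), so the set of u with L_u W <= W is a linear
   subspace of R^3 closed under the cross product.  If it contains two unit
   vectors u, v with v <> +-u, then u, w = u x v and u x w form an orthogonal
   basis, so W is invariant under all of I, J, K.  Hence a rational subspace
   that is not H-invariant is invariant under at most two complex structures
   +-L, and there are only countably many rational subspaces: each is the row
   space of an integer combination of the rows of the basis matrix of the
   lattice (which need not even have maximal rank for this). *)

Section Vector3.
Variable R : realFieldType.
Implicit Types u v : R * R * R.

Definition dot3 u v : R :=
  let: (a, b, c) := u in let: (a', b', c') := v in a * a' + b * b' + c * c'.

Definition cross3 u v : R * R * R :=
  let: (a, b, c) := u in let: (a', b', c') := v in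
  (b * c' - c * b', c * a' - a * c', a * b' - b * a').

Lemma dot3_eq0 u : dot3 u u = 0 -> u = 0.
Proof.
case: u => [[a b] c] /=; rewrite -!expr2 => uu0.
have := sqr_ge0 a; have := sqr_ge0 b; have := sqr_ge0 c => c2 b2 a2.
have sqr0 (x : R) : x ^+ 2 = 0 -> x = 0 by move/eqP; rewrite sqrf_eq0 => /eqP.
have -> : a = 0 by apply: sqr0; lra.
have -> : b = 0 by apply: sqr0; lra.
have -> : c = 0 by apply: sqr0; lra.
reflexivity.
Qed.

Lemma cross3_eq0_unit u v :
  dot3 u u = 1 -> dot3 v v = 1 -> cross3 u v = 0 -> v = u \/ v = - u.
Proof.
case: u v => [[a b] c] [[a' b'] c'] /= uu vv [w1 w2 w3].
set k := a * a' + b * b' + c * c'.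
(* Componentwise, u x (u x v) = (u.v) u - (u.u) v with u x v = 0 and u.u = 1. *)
have ea : a' = k * a.
  have : a' * (a * a + b * b + c * c) - k * a
         = c * (c * a' - a * c') - b * (a * b' - b * a') by rewrite /k; ring.
  by rewrite uu w2 w3 mulr1 !mulr0 subr0 => /eqP; rewrite subr_eq0 => /eqP.
have eb : b' = k * b.
  have : b' * (a * a + b * b + c * c) - k * b
         = a * (a * b' - b * a') - c * (b * c' - c * b') by rewrite /k; ring.
  by rewrite uu w1 w3 mulr1 !mulr0 subr0 => /eqP; rewrite subr_eq0 => /eqP.
have ec : c' = k * c.
  have : c' * (a * a + b * b + c * c) - k * c
         = b * (b * c' - c * b') - a * (c * a' - a * c') by rewrite /k; ring.
  by rewrite uu w1 w2 mulr1 !mulr0 subr0 => /eqP; rewrite subr_eq0 => /eqP.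
have : k ^+ 2 = 1.
  by rewrite -vv ea eb ec -[LHS]mulr1 -uu; ring.
move/eqP; rewrite sqrf_eq1 => /orP[] /eqP k1; rewrite ea eb ec k1.
  by left; rewrite !mul1r.
by right; rewrite !mulN1r.
Qed.

End Vector3.

Lemma stablemxZ (F : fieldType) (m n : nat) (W : 'M[F]_(m, n)) (f : 'M[F]_n) a :
  stablemx W f -> stablemx W (a *: f).
Proof. by rewrite -scalemxAr => /(scalemx_sub a). Qed.

Section QuaternionAction.
Variables (R : realType) (n : nat) (I J : 'M[R]_n).
Hypothesis IJ : quat_action I J.
Local Notation K := (quatK I J).

Definition quat_vec (u : R * R * R) : 'M[R]_n :=
  let: (a, b, c) := u in quat_elt I J a b c.

Lemma quat_vec_mul u v :
  quat_vec u *m quat_vec v = quat_vec (cross3 u v) - (dot3 u v)%:M.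
Proof.
case: IJ => II [JJ IJ_anti].
have JI : J *m I = - K by rewrite /quatK IJ_anti opprK.
have IK : I *m K = - J by rewrite /quatK mulmxA II mulNmx mul1mx.
have KI : K *m I = J by rewrite /quatK -mulmxA JI mulmxN IK opprK.
have KJ : K *m J = - I by rewrite /quatK -mulmxA JJ mulmxN mulmx1.
have JK : J *m K = I by rewrite {1}/quatK mulmxA JI mulNmx KJ opprK.
have KK : K *m K = - 1%:M by rewrite {1}/quatK -mulmxA JK II.
case: u v => [[a b] c] [[a' b'] c'] /=; rewrite /quat_elt -scalemx1.
rewrite !mulmxDl !mulmxDr -!scalemxAl -!scalemxAr.
rewrite II JJ KK JI IK KI JK KJ; change (I *m J) with K.
move: (1%:M : 'M[R]_n) I J K => E A B C.
by apply/matrixP => i j; rewrite !mxE; ring.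
Qed.

Lemma quat_vec_span u v e : dot3 u u != 0 ->
  let w := cross3 u v in dot3 w w != 0 ->
  quat_vec e = (dot3 e u / dot3 u u) *: quat_vec u
             + (dot3 e w / dot3 w w) *: quat_vec w
             + (dot3 e (cross3 u w) / (dot3 u u * dot3 w w)) *: quat_vec (cross3 u w).
Proof.
case: u v e => [[a b] c] [[a' b'] c'] [[x y] z] /= uu0 ww0.
rewrite /quat_elt; move: I J K => A B C.
by apply/matrixP => i j; rewrite !mxE; field; rewrite uu0 ww0.
Qed.

Lemma quat_vec_units :
  [/\ quat_vec (1, 0, 0) = I, quat_vec (0, 1, 0) = J & quat_vec (0, 0, 1) = K].
Proof. by rewrite /= /quat_elt !scale1r !scale0r ?addr0 ?add0r. Qed.

Section StableSubspace.
Variables (m : nat) (W : 'M[R]_(m, n)).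

Definition quat_stable : Prop := [/\ stablemx W I, stablemx W J & stablemx W K].

Lemma stablemx_quat_cross u v :
  stablemx W (quat_vec u) -> stablemx W (quat_vec v) ->
  stablemx W (quat_vec (cross3 u v)).
Proof.
move=> Wu Wv; rewrite -(subrK (dot3 u v)%:M (quat_vec _)) -quat_vec_mul.
by apply: stablemxD; [apply: stablemxM | apply: stablemxC].
Qed.

Lemma quat_stable_of_cross u v : dot3 u u != 0 -> cross3 u v != 0 ->
  stablemx W (quat_vec u) -> stablemx W (quat_vec v) -> quat_stable.
Proof.
move=> uu0 uv0 Wu Wv; set w := cross3 u v.
have ww0 : dot3 w w != 0 by apply: contra uv0 => /eqP/dot3_eq0/eqP.
have Ww : stablemx W (quat_vec w) by apply: stablemx_quat_cross.
have Wuw : stablemx W (quat_vec (cross3 u w)) by apply: stablemx_quat_cross.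
have We e : stablemx W (quat_vec e).
  rewrite (quat_vec_span e uu0 ww0).
  by do 2?apply: stablemxD; apply: stablemxZ.
case: quat_vec_units => vI vJ vK.
by split; [rewrite -vI | rewrite -vJ | rewrite -vK]; apply: We.
Qed.

Lemma finite_stabilizing_units : ~ quat_stable ->
  finite_set [set u | dot3 u u = 1 /\ stablemx W (quat_vec u)].
Proof.
move=> notH; set S := [set u | _].
have [[u0 [u0u0 Wu0]] | noS] := pselect (exists u, S u); last first.
  by apply: (sub_finite_set (B := set0)) => // u Su; apply: noS; exists u.
apply: (sub_finite_set (B := [set u0; - u0])); last exact: finite_set2.
move=> v [vv Wv]; have : cross3 u0 v = 0.
  apply/eqP; apply: contra_notT notH => uv0.
  by apply: (quat_stable_of_cross _ uv0 Wu0 Wv); rewrite u0u0 oner_eq0.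
by case/(cross3_eq0_unit u0u0 vv) => ->; [left | right].
Qed.

End StableSubspace.
End QuaternionAction.

Section RationalSubspace.
Variables (R : realType) (n : nat) (B : 'M[R]_n).

Definition lattice_mx (t : {m : nat & 'M[int]_(m, n)}) : 'M[R]_(tag t, n) :=
  map_mx (fun k : int => k%:~R) (tagged t) *m B.

Lemma rational_subspace_lattice_mx W :
  rational_subspace B W -> exists t, (W :=: lattice_mx t)%MS.
Proof.
case=> m [A [A_lattice [AW WA]]]; have [z Az] := choice A_lattice.
exists (existT _ m (\matrix_i z i)).
have -> : lattice_mx (existT _ m (\matrix_i z i)) = A.
  by apply/row_matrixP => i; rewrite row_mul -map_row rowK Az.
by apply/eqmxP; rewrite WA AW.
Qed.

End RationalSubspace.

Theorem lemma3p3 (R : realType) (n : nat) (I J B : 'M[R]_n) :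
  quat_action I J -> full_lattice B ->
  countable [set abc : R * R * R |
    let: (a, b, c) := abc in
    a ^+ 2 + b ^+ 2 + c ^+ 2 = 1 /\
    ~ (forall W : 'M[R]_n,
         rational_subspace B W -> mx_invariant W (quat_elt I J a b c) ->
         mx_invariant W I /\ mx_invariant W J /\ mx_invariant W (quatK I J))].
Proof.
move=> IJ _.
pose S t := [set u | dot3 u u = 1 /\ stablemx (lattice_mx B t) (quat_vec I J u)].
apply: (@sub_countable _ _ _
  (\bigcup_(t in [set t | ~ quat_stable I J (lattice_mx B t)]) S t)).
  apply: subset_card_le => -[[a b] c] /= [abc1].
  case/existsNP=> W /not_implyP[ratW /not_implyP[LW notHW]].
  have [t Wt] := rational_subspace_lattice_mx ratW.
  rewrite /mx_invariant in LW notHW.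
  exists t => /=.
    by rewrite /quat_stable -!(eqmx_stable _ Wt) => -[WI WJ WK]; apply: notHW.
  by split; rewrite /= -?(eqmx_stable _ Wt) -?expr2.
apply: bigcup_countable => [|t notH]; first exact: countableP.
exact/finite_set_countable/finite_stabilizing_units.
Qed.
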